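(* Let $\phi$ be a formula of Full Modal Team Logic $\mathcal{FMTL}$, let $(M,X)$ be a team model over a set $Prop$ of letters containing the letters of $\phi$, and let $p$ be a letter. If $(M,X)\models\tilde\exists p\,\phi$, then there is a team model $(K,Z)$ with $(K,Z)\rightleftharpoons_{Prop\setminus\{p\}}(M,X)$ and $(K,Z)\models\phi$.
   Context: Kripke models $M=(W,R,V)$, $V:W\to\mathcal P(Prop)$; team models $(M,X)$, $X\subseteq W$. Formulas of $\mathcal{FMTL}$: $p,\neg p,\bot,NE,\phi_1\wedge\phi_2,\phi_1\otimes\phi_2,\phi_1\vee\phi_2,\Diamond\phi,\Box\phi$. Team semantics: $(M,X)\models p$ iff $p\in V(s)$ for all $s\in X$; $\neg p$ iff $p\notin V(s)$ for all $s\in X$; $\bot$ iff $X=\emptyset$; $NE$ iff $X\neq\emptyset$; $\wedge$ componentwise; $\vee$: $(M,X)$ satisfies one of the disjuncts; $\otimes$: $X=X_1\cup X_2$ with $(M,X_i)\models\phi_i$; $(M,X)\models\Diamond\phi$ iff $(M,Y)\models\phi$ for some $Y$ such that every $x\in X$ has an $R$-successor in $Y$ and every $y\in Y$ is an $R$-successor of some $x\in X$; $(M,X)\models\Box\phi$ iff $(M,R[X])\models\phi$, $R[X]$ the set of successors of elements of $X$. For a set $\mathcal P$ of letters, $(M,w)\rightleftharpoons_{\mathcal P}(N,v)$: some relation containing $(w,v)$ has all pairs agreeing on letters of $\mathcal P$ and satisfying forth and back conditions; $(M,X)\rightleftharpoons_{\mathcal P}(N,Y)$: each $x\in X$ is $\mathcal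 P$-bisimilar to some $y\in Y$ and each $y\in Y$ to some $x\in X$. $(M,X)\models\tilde\exists p\,\phi$ iff there is $(M',X')$ with $(M',X')\rightleftharpoons_{\mathcal L(\phi)\setminus\{p\}}(M,X)$ and $(M',X')\models\phi$, where $\mathcal L(\phi)$ is the set of letters of $\phi$. *)

Record kmodel (L : Type) : Type := KModel {
  world : Type;
  rel : world -> world -> Prop;
  val : world -> L -> Prop }.
Arguments world {L} _.
Arguments rel {L} _ _ _.
Arguments val {L} _ _ _.

Definition model_over {L : Type} (P : L -> Prop) (M : kmodel L) : Prop :=
  forall w q, val M w q -> P q.

Definition team {L : Type} (M : kmodel L) := world M -> Prop.

Inductive fmtl (L : Type) : Type :=
| FAtom : L -> fmtl L
| FNeg : L -> fmtl L
| FBot : fmtl L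
| FNE : fmtl L
| FAnd : fmtl L -> fmtl L -> fmtl L
| FTensor : fmtl L -> fmtl L -> fmtl L
| FOr : fmtl L -> fmtl L -> fmtl L
| FDia : fmtl L -> fmtl L
| FBox : fmtl L -> fmtl L.
Arguments FAtom {L} _. Arguments FNeg {L} _. Arguments FAnd {L} _ _. Arguments FTensor {L} _ _. Arguments FOr {L} _ _. Arguments FDia {L} _. Arguments FBox {L} _.
Arguments FBot {L}.
Arguments FNE {L}.

Fixpoint letters {L : Type} (phi : fmtl L) (q : L) : Prop :=
  match phi with
  | FAtom p | FNeg p => q = p
  | FBot | FNE => False
  | FAnd a b | FTensor a b | FOr a b => letters a q \/ letters b q
  | FDia a | FBox a => letters a q
  end.

Definition img {L : Type} {M : kmodel L} (X : team M) : team M :=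
  fun y => exists x, X x /\ rel M x y.

Fixpoint sat {L : Type} (M : kmodel L) (X : team M) (phi : fmtl L) : Prop :=
  match phi with
  | FAtom p => forall s, X s -> val M s p
  | FNeg p => forall s, X s -> ~ val M s p
  | FBot => forall s, ~ X s
  | FNE => exists s, X s
  | FAnd a b => sat M X a /\ sat M X b
  | FTensor a b => exists X1 X2 : team M,
      (forall s, X s <-> X1 s \/ X2 s) /\ sat M X1 a /\ sat M X2 b
  | FOr a b => sat M X a \/ sat M X b
  | FDia a => exists Y : team M,
      (forall x, X x -> exists y, Y y /\ rel M x y) /\
      (forall y, Y y -> exists x, X x /\ rel M x y) /\ sat M Y a
  | FBox a => sat M (img X) a
  end.

Definition bisim_pt {L : Type} (Q : L -> Prop) (M : kmodel L) (w : world M)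
    (N : kmodel L) (v : world N) : Prop :=
  exists Z : world M -> world N -> Prop, Z w v /\
    forall a b, Z a b ->
      (forall q, Q q -> (val M a q <-> val N b q)) /\
      (forall a', rel M a a' -> exists b', rel N b b' /\ Z a' b') /\
      (forall b', rel N b b' -> exists a', rel M a a' /\ Z a' b').

Definition bisim_team {L : Type} (Q : L -> Prop) (M : kmodel L) (X : team M)
    (N : kmodel L) (Y : team N) : Prop :=
  (forall x, X x -> exists y, Y y /\ bisim_pt Q M x N y) /\
  (forall y, Y y -> exists x, X x /\ bisim_pt Q M x N y).

Definition sat_bexists {L : Type} (M : kmodel L) (X : team M) (p : L)
    (phi : fmtl L) : Prop :=
  exists (M' : kmodel L) (X' : team M'),
    bisim_team (fun q => letters phi q /\ q <> p) M' X' M X /\ sat M' X' phi.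

(* Glue the witness (M', X') of the bisimulation quantifier to (M, X): the
   worlds of K are the pairs (a, b) with a and b bisimilar for the letters of
   phi other than p, the accessibility relation is the product one, and the
   valuation is read off M' on the letters of phi and off M on the letters
   other than p (the two readings agree where both apply).  Both projections
   are then p-morphisms.  FMTL truth is invariant under p-morphic images of
   teams, so the first projection carries M', X' |= phi over to K; the
   second projection is a functional bisimulation onto (M, X) for every
   letter other than p. *)

From Stdlib Require Import Setoid.

Section BisimBasics.
Context {L : Type} (Q : L -> Prop) (M N : kmodel L).

Lemma bisim_pt_val a b q :
  bisim_pt Q M a N b -> Q q -> (val M a q <-> val N b q).
Proof. intros [Z [HZ HZc]]. apply (HZc a b HZ). Qed.

Lemma bisim_pt_forth a b a' :
  bisim_pt Q M a N b -> rel M a a' ->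
  exists b', rel N b b' /\ bisim_pt Q M a' N b'.
Proof.
  intros [Z [HZ HZc]] Ha.
  destruct (proj1 (proj2 (HZc a b HZ)) a' Ha) as [b' [Hb HZ']].
  exists b'. split; [exact Hb | exists Z; auto].
Qed.

Lemma bisim_pt_back a b b' :
  bisim_pt Q M a N b -> rel N b b' ->
  exists a', rel M a a' /\ bisim_pt Q M a' N b'.
Proof.
  intros [Z [HZ HZc]] Hb.
  destruct (proj2 (proj2 (HZc a b HZ)) b' Hb) as [a' [Ha HZ']].
  exists a'. split; [exact Ha | exists Z; auto].
Qed.

Lemma bisim_team_weaken (Q' : L -> Prop) (X : team M) (Y : team N) :
  (forall q, Q' q -> Q q) -> bisim_team Q M X N Y -> bisim_team Q' M X N Y.
Proof.
  intros HQ.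
  assert (Hpt : forall a b, bisim_pt Q M a N b -> bisim_pt Q' M a N b).
  { intros a b [Z [HZ HZc]]. exists Z. split; [exact HZ|].
    intros a0 b0 H0. destruct (HZc a0 b0 H0) as [Hv Hfb].
    split; [|exact Hfb]. intros q Hq. apply Hv, HQ, Hq. }
  intros [H1 H2]. split.
  - intros x Hx. destruct (H1 x Hx) as [y [Hy Hxy]]. eauto.
  - intros y Hy. destruct (H2 y Hy) as [x [Hx Hxy]]. eauto.
Qed.

End BisimBasics.

Section PMorphism.
Context {L : Type} (Q : L -> Prop) {K M : kmodel L} (f : world K -> world M).

Record pmorphism : Prop := {
  pmorphism_val : forall k q, Q q -> (val K k q <-> val M (f k) q);
  pmorphism_forth : forall k k', rel K k k' -> rel M (f k) (f k');
  pmorphism_back : forall k a', rel M (f k) a' ->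
    exists k', rel K k k' /\ f k' = a' }.

Definition is_image (T : team K) (S : team M) : Prop :=
  forall a, S a <-> exists k, T k /\ f k = a.

Lemma pmorphism_bisim_pt k : pmorphism -> bisim_pt Q K k M (f k).
Proof.
  intros Hf. exists (fun k a => f k = a). split; [reflexivity|].
  intros k0 a <-. split; [|split].
  - apply (pmorphism_val Hf).
  - intros k' Hk. exists (f k'). split; [apply (pmorphism_forth Hf), Hk | reflexivity].
  - apply (pmorphism_back Hf).
Qed.

Lemma pmorphism_bisim_team T S :
  pmorphism -> is_image T S -> bisim_team Q K T M S.
Proof.
  intros Hf HS. split.
  - intros k Hk. exists (f k).
    split; [apply HS; eauto | apply pmorphism_bisim_pt, Hf].
  - intros a Ha. apply HS in Ha as [k [Hk <-]].
    exists k. split; [exact Hk | apply pmorphism_bisim_pt, Hf].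
Qed.

Lemma is_image_restrict T S (S' : team M) :
  is_image T S -> (forall a, S' a -> S a) ->
  is_image (fun k => T k /\ S' (f k)) S'.
Proof.
  intros HS Hsub a. split.
  - intros Ha. destruct (proj1 (HS a) (Hsub a Ha)) as [k [Hk <-]]. eauto.
  - intros [k [[_ Hk] <-]]. exact Hk.
Qed.

Lemma is_image_img T S : pmorphism -> is_image T S -> is_image (img T) (img S).
Proof.
  intros Hf HS a. split.
  - intros [s [Hs Hr]]. apply HS in Hs as [k [Hk <-]].
    destruct (pmorphism_back Hf _ _ Hr) as [k' [Hk' <-]].
    exists k'. split; [exists k; auto | reflexivity].
  - intros [k' [[k [Hk Hr]] <-]]. exists (f k).
    split; [apply HS; eauto | apply (pmorphism_forth Hf), Hr].
Qed.

Definition image_invariant (phi : fmtl L) : Prop :=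
  forall T S, is_image T S -> (sat K T phi <-> sat M S phi).

Lemma image_invariant_tensor a b :
  image_invariant a -> image_invariant b -> image_invariant (FTensor a b).
Proof.
  intros IHa IHb T S HS. simpl. split.
  - intros [T1 [T2 [HU [H1 H2]]]].
    exists (fun s => exists k, T1 k /\ f k = s),
           (fun s => exists k, T2 k /\ f k = s).
    split; [|split].
    + intros s. rewrite (HS s). split.
      * intros [k [Hk <-]]. apply HU in Hk as [Hk|Hk]; eauto.
      * intros [[k [Hk <-]]|[k [Hk <-]]]; exists k; rewrite HU; auto.
    + apply (IHa T1); [intro; reflexivity | exact H1].
    + apply (IHb T2); [intro; reflexivity | exact H2].
  - intros [S1 [S2 [HU [H1 H2]]]].
    exists (fun k => T k /\ S1 (f k)), (fun k => T k /\ S2 (f k)).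
    split; [|split].
    + intros k. split.
      * intros Hk. assert (Hfk : S (f k)) by (apply HS; eauto).
        apply HU in Hfk as [Hfk|Hfk]; auto.
      * intros [[Hk _]|[Hk _]]; exact Hk.
    + apply (IHa _ S1); [|exact H1].
      apply is_image_restrict with (S := S); [exact HS|].
      intros s Hs. apply HU; auto.
    + apply (IHb _ S2); [|exact H2].
      apply is_image_restrict with (S := S); [exact HS|].
      intros s Hs. apply HU; auto.
Qed.

Lemma image_invariant_dia a :
  pmorphism -> image_invariant a -> image_invariant (FDia a).
Proof.
  intros Hf IHa T S HS. simpl. split.
  - intros [Y [Hfw [Hbk HY]]].
    exists (fun s => exists k, Y k /\ f k = s). split; [|split].
    + intros s Hs. apply HS in Hs as [k [Hk <-]].
      destruct (Hfw k Hk) as [y [Hy Hr]].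
      exists (f y). split; [eauto | apply (pmorphism_forth Hf), Hr].
    + intros s [y [Hy <-]]. destruct (Hbk y Hy) as [k [Hk Hr]].
      exists (f k). split; [apply HS; eauto | apply (pmorphism_forth Hf), Hr].
    + apply (IHa Y); [intro; reflexivity | exact HY].
  - intros [Y [Hfw [Hbk HY]]].
    (* The witness is the part of R[T] that f maps into Y. *)
    exists (fun k' => img T k' /\ Y (f k')). split; [|split].
    + intros k Hk. destruct (Hfw (f k)) as [y [Hy Hr]]; [apply HS; eauto|].
      destruct (pmorphism_back Hf _ _ Hr) as [k' [Hr' <-]].
      exists k'. split; [split; [exists k; auto | exact Hy] | exact Hr'].
    + intros k' [[k [Hk Hr]] _]. eauto.
    + apply (IHa _ Y); [|exact HY].
      apply is_image_restrict with (S := img S).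
      * apply is_image_img; assumption.
      * intros s Hs. destruct (Hbk s Hs) as [x [Hx Hr]]. exists x; auto.
Qed.

Lemma sat_pmorphism (phi : fmtl L) :
  pmorphism -> (forall q, letters phi q -> Q q) -> image_invariant phi.
Proof.
  intros Hf.
  induction phi as [q|q| | |a IHa b IHb|a IHa b IHb|a IHa b IHb|a IHa|a IHa];
    intros HQ; simpl in HQ.
  - intros T S HS. simpl. split.
    + intros H s Hs. apply HS in Hs as [k [Hk <-]].
      apply (pmorphism_val Hf); auto.
    + intros H k Hk. apply (pmorphism_val Hf); auto. apply H, HS; eauto.
  - intros T S HS. simpl. split.
    + intros H s Hs. apply HS in Hs as [k [Hk <-]].
      rewrite <- (pmorphism_val Hf); auto.
    + intros H k Hk. rewrite (pmorphism_val Hf); auto. apply H, HS; eauto.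
  - intros T S HS. simpl. split.
    + intros H s Hs. apply HS in Hs as [k [Hk _]]. exact (H k Hk).
    + intros H k Hk. apply (H (f k)), HS; eauto.
  - intros T S HS. simpl. split.
    + intros [k Hk]. exists (f k). apply HS; eauto.
    + intros [s Hs]. apply HS in Hs as [k [Hk _]]. eauto.
  - intros T S HS. simpl.
    rewrite (IHa (fun q h => HQ q (or_introl h)) T S HS).
    rewrite (IHb (fun q h => HQ q (or_intror h)) T S HS). tauto.
  - apply image_invariant_tensor; auto.
  - intros T S HS. simpl.
    rewrite (IHa (fun q h => HQ q (or_introl h)) T S HS).
    rewrite (IHb (fun q h => HQ q (or_intror h)) T S HS). tauto.
  - apply image_invariant_dia; auto.
  - intros T S HS. apply (IHa HQ), is_image_img; assumption.
Qed.

End PMorphism.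

Section Gluing.
Context {L : Type} (Q1 Q2 : L -> Prop) (M1 M2 : kmodel L).

Definition glued_world : Type :=
  {ab : world M1 * world M2
  | bisim_pt (fun q => Q1 q /\ Q2 q) M1 (fst ab) M2 (snd ab)}.

Definition glued : kmodel L :=
  KModel L glued_world
    (fun x y => rel M1 (fst (proj1_sig x)) (fst (proj1_sig y)) /\
                rel M2 (snd (proj1_sig x)) (snd (proj1_sig y)))
    (fun x q => (Q1 q /\ val M1 (fst (proj1_sig x)) q) \/
                (Q2 q /\ val M2 (snd (proj1_sig x)) q)).

Definition glued_fst (x : world glued) : world M1 := fst (proj1_sig x).
Definition glued_snd (x : world glued) : world M2 := snd (proj1_sig x).

Definition glued_team (X1 : team M1) (X2 : team M2) : team glued :=
  fun x => X1 (glued_fst x) /\ X2 (glued_snd x).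

Lemma glued_fst_pmorphism : pmorphism Q1 glued_fst.
Proof.
  split.
  - intros [[a b] Hab] q Hq. unfold glued_fst, glued_snd. simpl. split.
    + intros [[_ H]|[Hq2 H]]; [exact H|].
      apply (bisim_pt_val _ _ _ _ _ _ Hab); [split|]; assumption.
    + intros H. left. split; assumption.
  - intros k k' [Hr _]. exact Hr.
  - intros [[a b] Hab] a' Hr. unfold glued_fst in *. simpl in *.
    destruct (bisim_pt_forth _ _ _ _ _ _ Hab Hr) as [b' [Hr' Hab']].
    exists (exist _ (a', b') Hab'). split; [split|]; simpl; auto.
Qed.

Lemma glued_snd_pmorphism : pmorphism Q2 glued_snd.
Proof.
  split.
  - intros [[a b] Hab] q Hq. unfold glued_fst, glued_snd. simpl. split.
    + intros [[Hq1 H]|[_ H]]; [|exact H].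
      apply (bisim_pt_val _ _ _ _ _ _ Hab); [split|]; assumption.
    + intros H. right. split; assumption.
  - intros k k' [_ Hr]. exact Hr.
  - intros [[a b] Hab] b' Hr. unfold glued_snd in *. simpl in *.
    destruct (bisim_pt_back _ _ _ _ _ _ Hab Hr) as [a' [Hr' Hab']].
    exists (exist _ (a', b') Hab'). split; [split|]; simpl; auto.
Qed.

Lemma glued_team_fst X1 X2 :
  bisim_team (fun q => Q1 q /\ Q2 q) M1 X1 M2 X2 ->
  is_image glued_fst (glued_team X1 X2) X1.
Proof.
  intros [H1 _] a. split.
  - intros Ha. destruct (H1 a Ha) as [b [Hb Hab]].
    exists (exist _ (a, b) Hab). split; [split|]; auto.
  - intros [k [[Hk _] <-]]. exact Hk.
Qed.

Lemma glued_team_snd X1 X2 :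
  bisim_team (fun q => Q1 q /\ Q2 q) M1 X1 M2 X2 ->
  is_image glued_snd (glued_team X1 X2) X2.
Proof.
  intros [_ H2] b. split.
  - intros Hb. destruct (H2 b Hb) as [a [Ha Hab]].
    exists (exist _ (a, b) Hab). split; [split|]; auto.
  - intros [k [[_ Hk] <-]]. exact Hk.
Qed.

End Gluing.

Theorem mainTheorem7 (L : Type) (P : L -> Prop) (phi : fmtl L)
    (M : kmodel L) (X : team M) (p : L) :
  (forall q, letters phi q -> P q) ->
  model_over P M ->
  sat_bexists M X p phi ->
  exists (K : kmodel L) (Z : team K),
    bisim_team (fun q => P q /\ q <> p) K Z M X /\ sat K Z phi.
Proof.
  intros _ _ [M' [X' [HB Hsat]]].
  set (Q1 := letters phi). set (Q2 := fun q : L => q <> p).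
  exists (glued Q1 Q2 M' M), (glued_team Q1 Q2 M' M X' X).
  split.
  - apply bisim_team_weaken with (Q := Q2); [unfold Q2; tauto|].
    apply pmorphism_bisim_team with (f := glued_snd Q1 Q2 M' M).
    + apply glued_snd_pmorphism.
    + apply glued_team_snd, HB.
  - apply (sat_pmorphism Q1 (glued_fst Q1 Q2 M' M) phi) with (S := X').
    + apply glued_fst_pmorphism.
    + unfold Q1; auto.
    + apply glued_team_fst, HB.
    + exact Hsat.
Qed.
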